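(* Let $L=L(m,n;k,l)$ be an $L$-shaped supergrid graph with $m-k=n-l=1$ and $l>1$, and let $s=(s_x,s_y)$, $t=(t_x,t_y)$ be distinct vertices of $L$. Then: (UB1) if $s_y,t_y\le l$, every simple path between $s$ and $t$ has at most $|t_y-s_y|+1$ vertices; (UB2) if $s_y<l$ and $t_x>1$, every simple path between $s$ and $t$ has at most $n-s_y+t_x$ vertices; (UB3) if $s_x=t_x=1$, $\max\{s_y,t_y\}=n$, and either $k>1$ or ($k=1$ and $\min\{s_y,t_y\}>1$), every simple path between $s$ and $t$ has at most $|t_y-s_y|+2$ vertices.
   Context: The infinite supergrid graph has as vertices all points $(x,y)\in\mathbb{Z}^2$, two distinct vertices $u,v$ being adjacent iff $|u_x-v_x|\le 1$ and $|u_y-v_y|\le 1$. For integers $m,n>1$ and $k,l\ge 1$ with $m-k\ge 1$, $n-l\ge 1$, $L(m,n;k,l)$ is the subgraph induced by $\{(x,y):1\le x\le m,\ 1\le y\le n\}\setminus\{(x,y): m-k+1\le x\le m,\ 1\le y\le l\}$. The length of a path is its number of vertices. *)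

(* Vertices of the supergrid are pairs of naturals (x, y);
   all vertices of L(m,n;k,l) have positive coordinates, so nat suffices. *)
From mathcomp Require Import all_boot.
Set Implicit Arguments. Unset Strict Implicit. Unset Printing Implicit Defensive.

Definition vertex := (nat * nat)%type.

Definition absdiff (a b : nat) : nat := (a - b) + (b - a).

Definition inL (m n k l : nat) (v : vertex) : bool :=
  [&& 1 <= v.1 <= m, 1 <= v.2 <= n &
      ~~ ((m - k + 1 <= v.1 <= m) && (1 <= v.2 <= l))].

Definition sadj (u v : vertex) : bool :=
  [&& u != v, absdiff u.1 v.1 <= 1 & absdiff u.2 v.2 <= 1].

(* p is a simple path in L(m,n;k,l) from s to t (listed as its vertex
   sequence); its length is size p (number of vertices). *)
Definition simple_path (m n k l : nat) (s t : vertex) (p : seq vertex) : bool :=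
  match p with
  | [::] => false
  | x :: q => [&& x == s, last x q == t, path sadj x q, uniq p
               & all (inL m n k l) p]
  end.

From mathcomp Require Import all_boot zify.
Set Implicit Arguments. Unset Strict Implicit.

(* When m - k = n - l = 1, L(m,n;k,l) is a hook: the column x = 1 below the
   top row, followed by the top row y = n.  Numbering its vertices along the
   hook, supergrid adjacency only joins consecutive vertices, except for the
   chord from (1,n-1) to (2,n), which skips index n.  Hence a path cannot pass
   an index c <> n without stopping at it, and a simple path stops there at
   most once: it stays between any two such indices that enclose both of its
   endpoints, so it has at most as many vertices as that index range. *)

Section LevelCrossing.

Variables (T : eqType) (e : rel T) (f : T -> nat).

Definition no_skip (c : nat) : Prop :=
  forall u v, e u v -> (f u < c -> f v <= c) /\ (c < f u -> c <= f v).

Lemma path_ivt x q c : path e x q -> no_skip c ->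
  (f x <= c <= f (last x q)) || (f (last x q) <= c <= f x) ->
  c \in map f (x :: q).
Proof.
move=> + skip_c; elim: q x => [|y q IHq] x /=; first by rewrite inE; lia.
case/andP=> exy pyq between.
have [-> | fxc] := eqVneq (f x) c; first exact: mem_head.
rewrite inE IHq ?orbT //.
by have [] := skip_c _ _ exy; move: fxc => /eqP; lia.
Qed.

(* Each half of the path, split at v, meets level c; as levels are not
   repeated, they can only meet it at v. *)
Lemma uniq_path_level_once x q c v : path e x q -> uniq (map f (x :: q)) ->
  no_skip c -> v \in x :: q ->
  (f x <= c <= f v) || (f v <= c <= f x) ->
  (f v <= c <= f (last x q)) || (f (last x q) <= c <= f v) ->
  f v = c.
Proof.
move=> + + skip_c vq; case/splitPl: q / vq => q1 q2 last_q1.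
rewrite cat_path last_cat -last_q1 -cat_cons map_cat cat_uniq.
case/andP=> pq1 pq2 /and3P[_ not_shared _] c_first c_second.
have c_q1 : c \in map f (x :: q1) by apply: path_ivt; rewrite // -last_q1.
have /[!inE] /orP[/eqP // | c_q2] := path_ivt pq2 skip_c c_second.
by case/negP: not_shared; apply/hasP; exists c.
Qed.

Lemma uniq_path_within x q lo hi : path e x q -> uniq (map f (x :: q)) ->
  no_skip lo -> no_skip hi ->
  lo <= f x <= hi -> lo <= f (last x q) <= hi ->
  {in x :: q, forall v, lo <= f v <= hi}.
Proof.
move=> pq uq skip_lo skip_hi x_in last_in v vq.
have [v_lo | ] := ltnP (f v) lo.
  by have := uniq_path_level_once pq uq skip_lo vq; lia.
have [hi_v | ] := ltnP hi (f v); last lia.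
by have := uniq_path_level_once pq uq skip_hi vq; lia.
Qed.

Lemma size_uniq_path_le x q lo hi : path e x q -> uniq (map f (x :: q)) ->
  no_skip lo -> no_skip hi ->
  lo <= f x <= hi -> lo <= f (last x q) <= hi ->
  size (x :: q) <= hi + 1 - lo.
Proof.
move=> pq uq skip_lo skip_hi x_in last_in.
rewrite -(size_map f) -[hi + 1 - lo](size_iota lo) uniq_leq_size //.
move=> _ /mapP[v vq ->]; rewrite mem_iota.
by have := uniq_path_within pq uq skip_lo skip_hi x_in last_in vq; lia.
Qed.

End LevelCrossing.

Section Hook.

Variables m n k l : nat.
Hypotheses (mk1 : m - k = 1) (nl1 : n - l = 1).

Definition hook_index (v : vertex) : nat :=
  if v.2 < n then v.2 else n + v.1 - 1.

Lemma inL_hook v : inL m n k l v ->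
  (v.1 = 1 /\ 1 <= v.2 < n) \/ (v.2 = n /\ 1 <= v.1 <= m).
Proof. by case: v => x y; rewrite /inL /= => v_in; lia. Qed.

Lemma hook_index_inj : {in inL m n k l &, injective hook_index}.
Proof.
move=> [x y] [x' y'] /inL_hook/= u_hook /inL_hook/= v_hook; rewrite /hook_index /=.
by case: (ltnP y n); case: (ltnP y' n) => y'_n y_n eq_idx; congr pair; lia.
Qed.

Lemma hook_no_skip c : c != n ->
  no_skip [rel u v | [&& sadj u v, inL m n k l u & inL m n k l v]] hook_index c.
Proof.
move=> /eqP cn [x y] [x' y'] /and3P[/and3P[_ dx dy] /inL_hook + /inL_hook].
move: dx dy; rewrite /hook_index /absdiff /=.
by case: (ltnP y n); case: (ltnP y' n); lia.
Qed.

Lemma simple_path_size_le s t p lo hi : simple_path m n k l s t p ->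
  lo != n -> hi != n ->
  lo <= hook_index s <= hi -> lo <= hook_index t <= hi ->
  size p <= hi + 1 - lo.
Proof.
case: p => [// | x q] /and5P[/eqP-> /eqP last_q ps uniq_p p_in] lo_n hi_n s_in t_in.
have /(sub_in_path _ p_in) ps_hook := ps.
apply: size_uniq_path_le (hook_no_skip lo_n) (hook_no_skip hi_n) _ _ => //.
- by apply: ps_hook => u v u_in v_in /= ->; apply/and3P; split.
- rewrite (map_inj_in_uniq (f := hook_index)) // => u v /(allP p_in) + /(allP p_in).
  exact: hook_index_inj.
- by rewrite last_q.
Qed.

End Hook.

Theorem lemma10 (m n k l : nat) (s t : vertex) :
  1 < m -> 1 < n -> 1 <= k -> 1 <= l ->
  m - k = 1 -> n - l = 1 -> 1 < l ->
  inL m n k l s -> inL m n k l t -> s != t ->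
  [/\ (s.2 <= l -> t.2 <= l ->
         forall p, simple_path m n k l s t p -> size p <= absdiff t.2 s.2 + 1),
      (s.2 < l -> 1 < t.1 ->
         forall p, simple_path m n k l s t p -> size p <= n - s.2 + t.1)
    & (s.1 = 1 -> t.1 = 1 -> maxn s.2 t.2 = n ->
         (1 < k \/ (k = 1 /\ 1 < minn s.2 t.2)) ->
         forall p, simple_path m n k l s t p -> size p <= absdiff t.2 s.2 + 2)].
Proof.
move=> _ _ _ _ mk1 nl1 _ /(inL_hook mk1 nl1) s_hook /(inL_hook mk1 nl1) t_hook s_neq_t.
have size_le p lo hi := @simple_path_size_le m n k l mk1 nl1 s t p lo hi.
rewrite /hook_index /absdiff in size_le *; split.
- move=> s_low t_low p /(size_le p (minn s.2 t.2) (maxn s.2 t.2)).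
  by case: ifP; case: ifP; lia.
- move=> s_low t_row p /(size_le p s.2 (n + t.1 - 1)).
  by case: ifP; case: ifP; lia.
- (* When m - k = 1 the condition on k is not needed. *)
  move=> s_col t_col s_t_top _ p /(size_le p (minn s.2 t.2) n.+1).
  have : s.2 != t.2.
    apply: contra s_neq_t => /eqP s_t.
    by rewrite [s]surjective_pairing [t]surjective_pairing s_col t_col s_t.
  by case: ifP; case: ifP; lia.
Qed.
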